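(* Let $U=(u_1,\dots,u_n)$ be a sequence of (precise) points in $\mathbb{R}^d$ and $W=(w_1,\dots,w_m)$ a sequence of imprecise points, each modeled as a closed $d$-dimensional ball, and let $\delta>0$. Then whether $F^{\max}_1(U,W)\le\delta$ can be determined in $O(d(n+m))$ time and space.
   Context: For point sequences $A=(a_1,\dots,a_n)$, $B=(b_1,\dots,b_m)$ with Euclidean distance $d(\cdot,\cdot)$, the discrete Fréchet distance $F(A,B)$ is the minimum over all sequences of index pairs from $(1,1)$ to $(n,m)$, each step increasing the first index by one, the second by one, or both by one, of the maximum of $d(a_i,b_j)$ over pairs $(i,j)$ in the sequence. The one-sided discrete Fréchet distance with shortcuts on side $B$ is $F_c(A,B)=\min\{F(A,B')\}$ over all non-empty subsequences $B'$ of $B$ (order preserved). For region sequences $U=(u_1,\dots,u_n)$, $W=(w_1,\dots,w_m)$, $F^{\max}_1(U,W)=\max\{F_c(A,B)\}$ over all realizations $A=(a_1,\dots,a_n)$, $B=(b_1,\dots,b_m)$ with $a_i\in u_i$, $b_j\in w_j$; a precise point is a region consisting of one point. *)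

From Stdlib Require Import Reals Lra Lia List ZArith.
Import ListNotations.
Open Scope R_scope.

Definition point := list R.

Fixpoint sqsum (a b : point) : R :=
  match a, b with
  | x :: a', y :: b' => (x - y) * (x - y) + sqsum a' b'
  | _, _ => 0
  end.

(* Euclidean distance (for points of the same dimension). *)
Definition dist (a b : point) : R := sqrt (sqsum a b).

(* A coupling (0-based index pairs) between sequences of lengths n and m:
   starts at (0,0), ends at (n-1,m-1), each step increases the first index,
   the second index, or both, by one. *)
Definition valid_step (p q : nat * nat) : Prop :=
  (fst q = S (fst p) /\ snd q = snd p) \/
  (fst q = fst p /\ snd q = S (snd p)) \/
  (fst q = S (fst p) /\ snd q = S (snd p)).

Fixpoint steps_ok (p : nat * nat) (l : list (nat * nat)) : Prop :=
  match l with
  | [] => True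
  | q :: l' => valid_step p q /\ steps_ok q l'
  end.

Definition is_coupling (n m : nat) (c : list (nat * nat)) : Prop :=
  match c with
  | [] => False
  | p :: l => p = (0%nat, 0%nat) /\ steps_ok p l /\
              last c (0%nat, 0%nat) = (Nat.pred n, Nat.pred m)
  end.

(* F(A,B) <= delta, with F the discrete Frechet distance
   (min over couplings of the max distance along the coupling). *)
Definition frechet_le (A B : list point) (delta : R) : Prop :=
  exists c, is_coupling (length A) (length B) c /\
    forall p, In p c -> dist (nth (fst p) A []) (nth (snd p) B []) <= delta.

Inductive sublist {T : Type} : list T -> list T -> Prop :=
  | sublist_nil : sublist [] []
  | sublist_skip x l l' : sublist l l' -> sublist l (x :: l')
  | sublist_keep x l l' : sublist l l' -> sublist (x :: l) (x :: l').

(* F_c(A,B) <= delta : one-sided Frechet distance with shortcuts on B. *)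
Definition frechet_c_le (A B : list point) (delta : R) : Prop :=
  exists B', sublist B' B /\ B' <> [] /\ frechet_le A B' delta.

(* A ball (center, radius). *)
Definition ball := (point * R)%type.

Definition realizes (d : nat) (W : list ball) (B : list point) : Prop :=
  length B = length W /\
  forall j, (j < length W)%nat ->
    length (nth j B []) = d /\
    dist (nth j B []) (fst (nth j W ([], 0))) <= snd (nth j W ([], 0)).

(* F^max_1(U,W) <= delta, for U a sequence of precise points (its only
   realization is U itself) and W a sequence of closed balls in R^d. *)
Definition Fmax_le (d : nat) (U : list point) (W : list ball) (delta : R) : Prop :=
  forall B, realizes d W B -> frechet_c_le U B delta.

(* Integer registers ir, real registers rr (both indexed by nat, a program
   uses only finitely many), an integer memory im and a real memory rm,
   both indirectly addressed through integer registers.  Every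
   instruction costs one time unit. *)
Inductive instr : Type :=
  | IConst (i : nat) (k : nat)
  | IAdd (i j k : nat)
  | ISub (i j k : nat)
  | IJle (i j : nat) (t : nat)
  | ILoad (i a : nat)
  | IStore (a i : nat)
  | RConst (x : nat) (z : Z)
  | RAdd (x y z : nat)
  | RSub (x y z : nat)
  | RMul (x y z : nat)
  | RDiv (x y z : nat)
  | RSqrt (x y : nat)
  | RJle (x y : nat) (t : nat)
  | RLoad (x a : nat)
  | RStore (a x : nat)
  | Halt.

Definition program := list instr.

Record state := mkState {
  pc : nat;
  ir : nat -> nat;
  rr : nat -> R;
  im : nat -> nat;
  rm : nat -> R;
  hw : nat  (* high-water mark: 1 + largest memory address accessed *)
}.

Definition upd {T : Type} (f : nat -> T) (a : nat) (v : T) : nat -> T :=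
  fun b => if Nat.eqb b a then v else f b.

Definition halted (P : program) (s : state) : Prop :=
  nth (pc s) P Halt = Halt.

Definition step (P : program) (s : state) : state :=
  let nx := S (pc s) in
  match nth (pc s) P Halt with
  | IConst i k => mkState nx (upd (ir s) i k) (rr s) (im s) (rm s) (hw s)
  | IAdd i j k => mkState nx (upd (ir s) i (ir s j + ir s k)%nat) (rr s) (im s) (rm s) (hw s)
  | ISub i j k => mkState nx (upd (ir s) i (ir s j - ir s k)%nat) (rr s) (im s) (rm s) (hw s)
  | IJle i j t => mkState (if Nat.leb (ir s i) (ir s j) then t else nx)
                    (ir s) (rr s) (im s) (rm s) (hw s)
  | ILoad i a => mkState nx (upd (ir s) i (im s (ir s a))) (rr s) (im s) (rm s)
                    (Nat.max (hw s) (S (ir s a)))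
  | IStore a i => mkState nx (ir s) (rr s) (upd (im s) (ir s a) (ir s i)) (rm s)
                    (Nat.max (hw s) (S (ir s a)))
  | RConst x z => mkState nx (ir s) (upd (rr s) x (IZR z)) (im s) (rm s) (hw s)
  | RAdd x y z => mkState nx (ir s) (upd (rr s) x (rr s y + rr s z)) (im s) (rm s) (hw s)
  | RSub x y z => mkState nx (ir s) (upd (rr s) x (rr s y - rr s z)) (im s) (rm s) (hw s)
  | RMul x y z => mkState nx (ir s) (upd (rr s) x (rr s y * rr s z)) (im s) (rm s) (hw s)
  | RDiv x y z => mkState nx (ir s) (upd (rr s) x (rr s y / rr s z)) (im s) (rm s) (hw s)
  | RSqrt x y => mkState nx (ir s) (upd (rr s) x (sqrt (rr s y))) (im s) (rm s) (hw s)
  | RJle x y t => mkState (if Rle_dec (rr s x) (rr s y) then t else nx)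
                    (ir s) (rr s) (im s) (rm s) (hw s)
  | RLoad x a => mkState nx (ir s) (upd (rr s) x (rm s (ir s a))) (im s) (rm s)
                    (Nat.max (hw s) (S (ir s a)))
  | RStore a x => mkState nx (ir s) (rr s) (im s) (upd (rm s) (ir s a) (rr s x))
                    (Nat.max (hw s) (S (ir s a)))
  | Halt => s
  end.

Fixpoint run (P : program) (t : nat) (s : state) : state :=
  match t with
  | O => s
  | S t' => run P t' (step P s)
  end.

(* Input encoding: ir 0 = d, ir 1 = n, ir 2 = m, rr 0 = delta; real memory
   holds the coordinates of u_1..u_n (address i*d+k for coordinate k of
   u_(i+1)), then those of the centers of w_1..w_m (address (n+j)*d+k),
   then the radii (address (n+m)*d+j). *)
Definition input_mem (d : nat) (U : list point) (W : list ball) : nat -> R :=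
  let n := length U in let m := length W in
  fun a =>
    if Nat.ltb a (n * d) then nth (a mod d) (nth (a / d) U []) 0
    else if Nat.ltb a ((n + m) * d) then
      nth ((a - n * d) mod d) (fst (nth ((a - n * d) / d) W ([], 0))) 0
    else if Nat.ltb a ((n + m) * d + m) then
      snd (nth (a - (n + m) * d) W ([], 0))
    else 0.

Definition init_state (d : nat) (U : list point) (W : list ball) (delta : R) : state :=
  mkState 0
    (fun i => match i with O => d | 1%nat => length U | 2%nat => length W | _ => 0%nat end)
    (fun x => match x with O => delta | _ => 0 end)
    (fun _ => 0%nat)
    (input_mem d U W)
    ((length U + length W) * d + length W)%nat.

(* A ball w = (c, r) covers a point u safely when every point of w is within delta of u,
   i.e. dist u c + r <= delta.  Scan the balls of W in order, each one advancing a pointer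
   into U across the maximal run of points it covers safely.  If the pointer reaches the
   end of U, then every realization B satisfies F_c(U, B) <= delta: keep the b_j with a
   nonempty run and match each of them to its run.  Otherwise let each b_j be the point of
   w_j farthest from the first point of U that w_j does not cover safely; the greedy
   matching of U against this B stops exactly where the scan did, and greedy matching is
   optimal for the one-sided distance against a fixed sequence, so F_c(U, B) > delta.
   The scan makes one pass over U and W with O(d) work per distance, and a real-RAM
   program performs it in O(d (n + m)) steps touching only the input memory. *)

From Pilot Require Import Defs.
From Stdlib Require Import Reals Lra Lia List.
Import ListNotations Defs.
Open Scope R_scope.

Lemma sqsum_comm (a b : point) : sqsum a b = sqsum b a.
Proof. revert b; induction a as [|x a IH]; intros [|y b]; simpl; auto. rewrite IH; ring. Qed.

Lemma sqsum_ge0 (a b : point) : 0 <= sqsum a b.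
Proof.
  revert b; induction a as [|x a IH]; intros [|y b]; simpl; try lra.
  specialize (IH b); pose proof (Rle_0_sqr (x - y)); unfold Rsqr in *; lra.
Qed.

Lemma sqsum_diag (a : point) : sqsum a a = 0.
Proof. induction a as [|x a IH]; simpl; auto. rewrite IH; ring. Qed.

Lemma dist_comm (a b : point) : dist a b = dist b a.
Proof. unfold dist; now rewrite sqsum_comm. Qed.

Lemma dist_diag (a : point) : dist a a = 0.
Proof. unfold dist; now rewrite sqsum_diag, sqrt_0. Qed.

Lemma sum_sq_ge0 x y : 0 <= x * x + y * y.
Proof. pose proof (Rle_0_sqr x); pose proof (Rle_0_sqr y); unfold Rsqr in *; lra. Qed.

Lemma sqrt_plane_triangle p q X Y : 0 <= X -> 0 <= Y ->
  sqrt ((p + q) * (p + q) + (sqrt X + sqrt Y) * (sqrt X + sqrt Y))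
    <= sqrt (p * p + X) + sqrt (q * q + Y).
Proof.
  intros HX HY.
  pose proof (sqrt_cauchy p (sqrt X) q (sqrt Y)) as Hcs; unfold Rsqr in Hcs.
  rewrite !sqrt_sqrt in Hcs by assumption.
  assert (HA : 0 <= p * p + X) by (pose proof (Rle_0_sqr p); unfold Rsqr in *; lra).
  assert (HB : 0 <= q * q + Y) by (pose proof (Rle_0_sqr q); unfold Rsqr in *; lra).
  pose proof (sqrt_sqrt _ HA); pose proof (sqrt_sqrt _ HB).
  pose proof (sqrt_sqrt _ HX); pose proof (sqrt_sqrt _ HY).
  pose proof (sqrt_pos (p * p + X)); pose proof (sqrt_pos (q * q + Y)).
  apply Rsqr_incr_0_var; [unfold Rsqr|lra].
  rewrite sqrt_sqrt by apply sum_sq_ge0.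
  set (A := sqrt (p * p + X)) in *; set (B := sqrt (q * q + Y)) in *.
  replace ((A + B) * (A + B)) with (A * A + B * B + 2 * (A * B)) by ring.
  nra.
Qed.

Lemma dist_triangle (a b c : point) : length a = length b -> length b = length c ->
  dist a c <= dist a b + dist b c.
Proof.
  unfold dist; revert b c.
  induction a as [|x a IH]; intros [|y b] [|z c] Hab Hbc; simpl in *;
    try discriminate.
  - rewrite sqrt_0; lra.
  - pose proof (sqsum_ge0 a b) as HX; pose proof (sqsum_ge0 b c) as HY.
    pose proof (sqrt_pos (sqsum a b)); pose proof (sqrt_pos (sqsum b c)).
    specialize (IH b c ltac:(lia) ltac:(lia)).
    assert (HZ : sqsum a c
                 <= (sqrt (sqsum a b) + sqrt (sqsum b c))
                    * (sqrt (sqsum a b) + sqrt (sqsum b c))).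
    { rewrite <- (sqrt_sqrt (sqsum a c)) by apply sqsum_ge0.
      pose proof (sqrt_pos (sqsum a c)); nra. }
    eapply Rle_trans.
    + apply sqrt_le_1_alt.
      replace (x - z) with ((x - y) + (y - z)) by ring.
      apply Rplus_le_compat_l, HZ.
    + now apply sqrt_plane_triangle.
Qed.

Fixpoint away_from (c u : point) (t : R) : point :=
  match c, u with
  | x :: c', y :: u' => (x + t * (x - y)) :: away_from c' u' t
  | _, _ => []
  end.

Lemma length_away_from (c u : point) (t : R) :
  length c = length u -> length (away_from c u t) = length c.
Proof. revert u; induction c; intros [|y u]; simpl; intros; try lia; auto. Qed.

Lemma sqsum_away_from_center (c u : point) (t : R) :
  sqsum (away_from c u t) c = t * t * sqsum c u.
Proof.
  revert u; induction c as [|x c IH]; intros [|y u]; simpl; try ring.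
  rewrite IH; ring.
Qed.

Lemma sqsum_away_from_origin (c u : point) (t : R) :
  sqsum u (away_from c u t) = (1 + t) * (1 + t) * sqsum u c.
Proof.
  revert u; induction c as [|x c IH]; intros [|y u]; simpl; try ring.
  rewrite IH; ring.
Qed.

Definition shift_first (c : point) (r : R) : point :=
  match c with x :: c' => (x + r) :: c' | [] => [] end.

Lemma dist_shift_first (c : point) (r : R) : c <> [] -> 0 <= r -> dist (shift_first c r) c = r.
Proof.
  destruct c as [|x c]; intros Hc Hr; [congruence|].
  unfold dist; simpl; rewrite sqsum_diag, Rplus_0_r.
  replace (x + r - x) with r by ring; now apply sqrt_square.
Qed.

Definition far_point (u : point) (w : ball) : point :=
  if Rle_dec (dist u (fst w)) 0 then shift_first (fst w) (snd w)
  else away_from (fst w) u (snd w / dist u (fst w)).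

Lemma far_point_spec (u c : point) (r : R) :
  length u = length c -> u <> [] -> 0 <= r ->
  length (far_point u (c, r)) = length u /\ dist (far_point u (c, r)) c = r /\
  dist u (far_point u (c, r)) = dist u c + r.
Proof.
  unfold far_point; simpl; intros Hlen Hu Hr.
  assert (Hc : c <> []) by (intros ->; destruct u; simpl in *; congruence || lia).
  destruct (Rle_dec (dist u c) 0) as [H0|H0].
  - assert (HD : dist u c = 0) by (pose proof (sqrt_pos (sqsum u c)); unfold dist in *; lra).
    assert (Hb : dist (shift_first c r) c = r) by now apply dist_shift_first.
    assert (Hlb : length (shift_first c r) = length u) by (destruct c; simpl in *; lia).
    repeat split; auto.
    pose proof (dist_triangle u c (shift_first c r) ltac:(lia) ltac:(lia)).
    pose proof (dist_triangle c u (shift_first c r) ltac:(lia) ltac:(lia)).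
    rewrite dist_comm in Hb; rewrite (dist_comm c u) in *; lra.
  - set (D := dist u c) in *.
    assert (HD : 0 < D) by lra.
    assert (Ht : 0 <= r / D)
      by (unfold Rdiv; apply Rmult_le_pos; [lra|left; apply Rinv_0_lt_compat; lra]).
    repeat split.
    + rewrite length_away_from; lia.
    + unfold dist at 1; rewrite sqsum_away_from_center, sqrt_mult_alt, sqrt_square
        by (auto; apply Rmult_le_pos; auto).
      replace (sqrt (sqsum c u)) with D by (unfold D, dist; now rewrite sqsum_comm).
      field; lra.
    + unfold dist at 1; rewrite sqsum_away_from_origin, sqrt_mult_alt, sqrt_square
        by (lra || (apply Rmult_le_pos; lra)).
      fold (dist u c) D; field; lra.
Qed.

Lemma skipn_nth_cons {A} (l : list A) i x0 : (i < length l)%nat ->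
  skipn i l = nth i l x0 :: skipn (S i) l.
Proof.
  revert i; induction l as [|x l IH]; intros [|i] Hi; simpl in *; try lia; auto.
  apply IH; lia.
Qed.

Lemma skipn_ne_nil {A} (l : list A) i : (i < length l)%nat -> skipn i l <> [].
Proof.
  intros Hi He; apply (f_equal (@length A)) in He.
  rewrite length_skipn in He; simpl in He; lia.
Qed.

Lemma firstn_S_app {A} (l : list A) j x0 : (j < length l)%nat ->
  firstn (S j) l = firstn j l ++ [nth j l x0].
Proof.
  revert j; induction l as [|x l IH]; intros [|j] Hj; simpl in *; try lia; auto.
  rewrite IH by lia; auto.
Qed.

Lemma last_cons_default {A} (x : A) l d d' : last (x :: l) d = last (x :: l) d'.
Proof.
  revert x; induction l as [|y l IH]; intros x; [reflexivity|].
  change (last (y :: l) d = last (y :: l) d'); apply IH.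
Qed.

Lemma last_cons_cons {A} (x y : A) l d : last (x :: y :: l) d = last (y :: l) y.
Proof. apply (last_cons_default y l). Qed.

Lemma last_map {A B} (f : A -> B) x l d :
  last (f x :: map f l) d = f (last (x :: l) x).
Proof.
  revert x; induction l as [|y l IH]; intros x; [reflexivity|].
  rewrite last_cons_cons, <- IH; reflexivity.
Qed.

Lemma sublist_nil {T} (l : list T) : sublist [] l.
Proof. induction l; constructor; auto. Qed.

Fixpoint prefix_len {A} (f : A -> bool) (l : list A) : nat :=
  match l with
  | [] => 0%nat
  | x :: l' => if f x then S (prefix_len f l') else 0%nat
  end.

Definition advance {A} (f : A -> bool) (l : list A) (i : nat) : nat :=
  (i + prefix_len f (skipn i l))%nat.

Section Advance.
Context {A : Type} (f : A -> bool) (l : list A).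

Lemma prefix_len_le l' : (prefix_len f l' <= length l')%nat.
Proof. induction l' as [|x l' IH]; simpl; [|destruct (f x)]; simpl; lia. Qed.

Lemma prefix_len_true x0 l' k : (k < prefix_len f l')%nat -> f (nth k l' x0) = true.
Proof.
  revert k; induction l' as [|x l' IH]; intros k; simpl; [lia|].
  destruct (f x) eqn:E; [|lia]. destruct k; auto. intros; apply IH; lia.
Qed.

Lemma prefix_len_false x0 l' : (prefix_len f l' < length l')%nat ->
  f (nth (prefix_len f l') l' x0) = false.
Proof.
  induction l' as [|x l' IH]; simpl; [lia|].
  destruct (f x) eqn:E; auto. intros; apply IH; lia.
Qed.

Lemma advance_ge i : (i <= advance f l i)%nat.
Proof. unfold advance; lia. Qed.

Lemma advance_le i : (i <= length l)%nat -> (advance f l i <= length l)%nat.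
Proof.
  unfold advance; pose proof (prefix_len_le (skipn i l)).
  rewrite length_skipn in *; lia.
Qed.

Lemma advance_true x0 i k : (i <= k)%nat -> (k < advance f l i)%nat ->
  f (nth k l x0) = true.
Proof.
  unfold advance; intros. replace k with (i + (k - i))%nat by lia.
  rewrite <- nth_skipn. apply (prefix_len_true x0). lia.
Qed.

Lemma advance_false x0 i : (advance f l i < length l)%nat ->
  f (nth (advance f l i) l x0) = false.
Proof.
  unfold advance; intros. rewrite <- nth_skipn. apply (prefix_len_false x0).
  rewrite length_skipn. lia.
Qed.

Lemma advance_unique x0 i s : (i <= s <= length l)%nat ->
  (forall k, (i <= k < s)%nat -> f (nth k l x0) = true) ->
  (s = length l \/ f (nth s l x0) = false) -> advance f l i = s.
Proof.
  intros Hs Htrue Hstop.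
  pose proof (advance_ge i); pose proof (advance_le i ltac:(lia)).
  destruct (Nat.lt_trichotomy (advance f l i) s) as [Hlt|[Heq|Hgt]]; auto.
  - pose proof (Htrue _ (conj (advance_ge i) Hlt)) as Hs'.
    rewrite (advance_false x0) in Hs' by lia; discriminate.
  - rewrite (advance_true x0 i s) in Hstop by lia; destruct Hstop; [lia|discriminate].
Qed.

Lemma advance_mono i i' : (i <= i' <= length l)%nat ->
  (advance f l i <= advance f l i')%nat.
Proof.
  intros Hi. pose proof (advance_ge i'); pose proof (advance_le i' ltac:(lia)).
  destruct (Nat.le_gt_cases (advance f l i) (advance f l i')) as [|Hgt]; auto.
  pose proof (advance_le i ltac:(lia)).
  destruct l as [|x0 l'] eqn:El; [simpl in *; lia|rewrite <- El in *].
  pose proof (advance_true x0 i (advance f l i') ltac:(lia) Hgt) as Hin.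
  rewrite (advance_false x0) in Hin by lia; discriminate.
Qed.

Lemma advance_step x0 i : (i < length l)%nat ->
  advance f l i = if f (nth i l x0) then advance f l (S i) else i.
Proof.
  unfold advance; intros Hi. rewrite (skipn_nth_cons l i x0 Hi); simpl.
  destruct (f (nth i l x0)); lia.
Qed.

Lemma advance_past x0 i k : (k <= advance f l i)%nat -> (k < length l)%nat ->
  f (nth k l x0) = true -> (S k <= advance f l i)%nat.
Proof.
  intros Hk Hl Hf. destruct (Nat.eq_dec k (advance f l i)) as [->|]; [|lia].
  rewrite (advance_false x0) in Hf by lia; discriminate.
Qed.

Lemma advance_end i : (length l <= i)%nat -> advance f l i = i.
Proof. intros; unfold advance; rewrite skipn_all2 by lia; simpl; lia. Qed.

End Advance.

Definition greedy {A T} (test : T -> A -> bool) (l : list A) (xs : list T)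
    (i : nat) : nat :=
  fold_left (fun i x => advance (test x) l i) xs i.

Section Greedy.
Context {A T : Type} (test : T -> A -> bool) (l : list A).

Lemma greedy_le xs i : (i <= length l)%nat -> (greedy test l xs i <= length l)%nat.
Proof.
  revert i; induction xs as [|x xs IH]; intros i Hi; simpl; auto.
  apply IH, advance_le; auto.
Qed.

Lemma greedy_sublist ys xs : sublist ys xs -> forall i i', (i <= i' <= length l)%nat ->
  (greedy test l ys i <= greedy test l xs i')%nat.
Proof.
  induction 1 as [|x ys xs _ IH|x ys xs _ IH]; intros i i' Hi; simpl; try lia.
  - apply IH. pose proof (advance_ge (test x) l i'); pose proof (advance_le (test x) l i').
    lia.
  - apply IH. pose proof (advance_mono (test x) l i i'); pose proof (advance_le (test x) l i').
    lia.
Qed.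

Lemma greedy_firstn_S xs j i y0 : (j < length xs)%nat ->
  greedy test l (firstn (S j) xs) i
  = advance (test (nth j xs y0)) l (greedy test l (firstn j xs) i).
Proof.
  intros Hj; unfold greedy; rewrite (firstn_S_app xs j y0 Hj), fold_left_app; reflexivity.
Qed.

End Greedy.

Definition near (delta : R) (b u : point) : bool :=
  if Rle_dec (dist u b) delta then true else false.

Definition covers (delta : R) (w : ball) (u : point) : bool :=
  if Rle_dec (dist u (fst w) + snd w) delta then true else false.

Lemma near_true (delta : R) (b u : point) : near delta b u = true <-> dist u b <= delta.
Proof. unfold near; destruct Rle_dec; split; easy. Qed.

Lemma near_false (delta : R) (b u : point) : near delta b u = false <-> delta < dist u b.
Proof.
  unfold near; destruct Rle_dec as [H|H]; [|apply Rnot_le_lt in H];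
    split; intros; easy || lra.
Qed.

Lemma covers_true (delta : R) (w : ball) (u : point) :
  covers delta w u = true <-> dist u (fst w) + snd w <= delta.
Proof. unfold covers; destruct Rle_dec; split; easy. Qed.

Lemma covers_false (delta : R) (w : ball) (u : point) :
  covers delta w u = false <-> delta < dist u (fst w) + snd w.
Proof.
  unfold covers; destruct Rle_dec as [H|H]; [|apply Rnot_le_lt in H];
    split; intros; easy || lra.
Qed.

Lemma covers_near (delta : R) (w : ball) (u b : point) :
  length u = length (fst w) -> length b = length (fst w) ->
  dist b (fst w) <= snd w -> covers delta w u = true -> near delta b u = true.
Proof.
  destruct w as [c r]; simpl.
  intros Hu Hb Hin Hcov; apply near_true; apply covers_true in Hcov; simpl in Hcov.
  pose proof (dist_triangle u c b ltac:(lia) ltac:(lia)).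
  rewrite (dist_comm c b) in *; lra.
Qed.

Lemma steps_ok_last (P : nat * nat -> Prop) p l : steps_ok p l -> P p ->
  (forall q r, valid_step q r -> In r l -> P q -> P r) -> P (last (p :: l) p).
Proof.
  revert p; induction l as [|q l IH]; intros p Hs Hp Hstep; auto.
  destruct Hs as [Hpq Hs].
  rewrite last_cons_cons.
  apply IH; auto.
  - apply (Hstep p q); simpl; auto.
  - intros r r' Hv Hr'; apply Hstep; simpl; auto.
Qed.

Lemma steps_ok_bounded p l : steps_ok p l -> forall q, In q (p :: l) ->
  (fst q <= fst (last (p :: l) p) /\ snd q <= snd (last (p :: l) p))%nat.
Proof.
  revert p; induction l as [|q0 l IH]; intros p Hs q Hq.
  - destruct Hq as [<-|[]]; simpl; lia.
  - destruct Hs as [Hv Hs]. rewrite last_cons_cons.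
    destruct Hq as [<-|Hq]; [|now apply IH].
    destruct (IH q0 Hs q0 (or_introl eq_refl)); unfold valid_step in Hv; lia.
Qed.

Lemma steps_ok_map (sh : nat * nat -> nat * nat) p l :
  (forall p q, valid_step p q -> valid_step (sh p) (sh q)) ->
  steps_ok p l -> steps_ok (sh p) (map sh l).
Proof.
  intros Hsh; revert p; induction l as [|q l IH]; intros p Hs; simpl in *; auto.
  destruct Hs; split; auto.
Qed.

Section GreedyOptimal.
Variables (delta : R) (U B : list point).

Let prefix_greedy (j : nat) : nat := greedy (near delta) U (firstn j B) 0.

Lemma prefix_greedy_valid_step p q : valid_step p q ->
  (fst q < length U)%nat -> (snd q < length B)%nat ->
  dist (nth (fst q) U []) (nth (snd q) B []) <= delta ->
  (S (fst p) <= prefix_greedy (S (snd p)))%nat ->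
  (S (fst q) <= prefix_greedy (S (snd q)))%nat.
Proof.
  intros Hv Hq1 Hq2 Hd Hp; unfold prefix_greedy in *.
  assert (Hnear : near delta (nth (snd q) B []) (nth (fst q) U []) = true)
    by now apply near_true.
  rewrite (greedy_firstn_S _ _ B (snd q) 0 []) by exact Hq2.
  pose proof (advance_ge (near delta (nth (snd q) B [])) U
                (greedy (near delta) U (firstn (snd q) B) 0)).
  destruct Hv as [[E1 E2]|[[E1 E2]|[E1 E2]]].
  - apply (advance_past _ U []); auto.
    rewrite <- (greedy_firstn_S _ _ B (snd q) 0 []) by exact Hq2.
    rewrite E1, E2; exact Hp.
  - rewrite E1, E2 in *; lia.
  - apply (advance_past _ U []); auto. rewrite E1, E2 in *; exact (Nat.le_trans _ _ _ Hp H).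
Qed.

Lemma frechet_le_greedy : U <> [] -> B <> [] -> frechet_le U B delta ->
  (length U <= greedy (near delta) U B 0)%nat.
Proof.
  intros HU HB [[|p l] [Hc Hd]]; [contradiction|].
  destruct Hc as [-> [Hs Hlast]].
  assert (Hbound : forall q, In q ((0, 0)%nat :: l) ->
            (fst q < length U)%nat /\ (snd q < length B)%nat).
  { intros q Hq; pose proof (steps_ok_bounded _ _ Hs q Hq) as Hq'; rewrite Hlast in Hq'.
    destruct U, B; simpl in *; try congruence; lia. }
  pose proof (steps_ok_last (fun q => S (fst q) <= prefix_greedy (S (snd q)))%nat
                _ _ Hs) as Hinv.
  rewrite Hlast in Hinv; simpl in Hinv.
  assert (HnB : S (Nat.pred (length B)) = length B) by (destruct B; simpl; congruence || lia).
  assert (HnU : S (Nat.pred (length U)) = length U) by (destruct U; simpl; congruence || lia).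
  rewrite HnB, HnU in Hinv; unfold prefix_greedy in Hinv; rewrite firstn_all in Hinv.
  apply Hinv.
  - destruct (Hbound _ (or_introl eq_refl)) as [HU0 HB0].
    unfold prefix_greedy; rewrite (greedy_firstn_S _ _ B 0 0 []) by exact HB0.
    apply (advance_past _ U []); simpl; auto; [lia|].
    apply near_true, (Hd (0, 0)%nat); now left.
  - intros q r Hv Hr; destruct (Hbound r (or_intror Hr)).
    apply prefix_greedy_valid_step; auto. apply Hd; now right.
Qed.

End GreedyOptimal.

Lemma frechet_c_le_greedy delta U B : U <> [] -> frechet_c_le U B delta ->
  (length U <= greedy (near delta) U B 0)%nat.
Proof.
  intros HU [B' [Hsub [HB' Hf]]].
  pose proof (frechet_le_greedy delta U B' HU HB' Hf).
  pose proof (greedy_sublist (near delta) U B' B Hsub 0 0 ltac:(lia)); lia.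
Qed.

Section FrechetExtension.
Variable delta : R.

Lemma frechet_le_extend (sh : nat * nat -> nat * nat) A B A' B' :
  (forall p q, valid_step p q -> valid_step (sh p) (sh q)) ->
  valid_step (0, 0)%nat (sh (0, 0)%nat) ->
  sh (Nat.pred (length A), Nat.pred (length B))
    = (Nat.pred (length A'), Nat.pred (length B')) ->
  dist (nth 0 A' []) (nth 0 B' []) <= delta ->
  (forall p, nth (fst (sh p)) A' [] = nth (fst p) A [] /\
             nth (snd (sh p)) B' [] = nth (snd p) B []) ->
  frechet_le A B delta -> frechet_le A' B' delta.
Proof.
  intros Hsh H00 Hend Hd0 Hnth [[|p l] [Hc Hd]]; [contradiction|].
  destruct Hc as [-> [Hs Hlast]].
  exists ((0, 0)%nat :: map sh ((0, 0)%nat :: l)); split.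
  - split; [reflexivity|split].
    + split; [exact H00|]. now apply steps_ok_map.
    + cbn [map]; rewrite last_cons_cons, last_map, Hlast; exact Hend.
  - intros p [<-|Hp]; auto.
    apply in_map_iff in Hp; destruct Hp as [q [<- Hq]].
    destruct (Hnth q) as [E1 E2]; unfold point in *; rewrite E1, E2; auto.
Qed.

Definition frechet_c_le_head (A : list point) (b : point) (B : list point) : Prop :=
  exists B', sublist B' B /\ frechet_le A (b :: B') delta.

Lemma frechet_c_le_head_single a b B : dist a b <= delta -> frechet_c_le_head [a] b B.
Proof.
  intros Hab; exists []; split; [apply sublist_nil|].
  exists [(0, 0)%nat]; split; [simpl; auto|].
  intros p [<-|[]]; exact Hab.
Qed.

Lemma frechet_c_le_head_stay a b A B : dist a b <= delta -> A <> [] ->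
  frechet_c_le_head A b B -> frechet_c_le_head (a :: A) b B.
Proof.
  intros Hab HA [B' [Hsub Hf]]; exists B'; split; auto.
  apply (frechet_le_extend (fun p => (S (fst p), snd p)) A (b :: B')); auto.
  - unfold valid_step; simpl; lia.
  - unfold valid_step; simpl; lia.
  - destruct A; [congruence|]; reflexivity.
Qed.

Lemma frechet_c_le_head_next a b A B : dist a b <= delta -> A <> [] ->
  frechet_c_le A B delta -> frechet_c_le_head (a :: A) b B.
Proof.
  intros Hab HA [B' [Hsub [HB' Hf]]]; exists B'; split; auto.
  apply (frechet_le_extend (fun p => (S (fst p), S (snd p))) A B'); auto.
  - unfold valid_step; simpl; lia.
  - unfold valid_step; simpl; lia.
  - destruct A, B'; [congruence..|]; reflexivity.
Qed.

Lemma frechet_c_le_keep A b B : frechet_c_le_head A b B -> frechet_c_le A (b :: B) delta.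
Proof.
  intros [B' [Hsub Hf]]; exists (b :: B'); split; [now constructor|split; [congruence|auto]].
Qed.

Lemma frechet_c_le_skip A x B : frechet_c_le A B delta -> frechet_c_le A (x :: B) delta.
Proof. intros [B' [Hsub Hf]]; exists B'; split; [now constructor|auto]. Qed.

End FrechetExtension.

Definition ball_in_dim (d : nat) (w : ball) : Prop := length (fst w) = d /\ 0 <= snd w.

Definition in_ball (d : nat) (w : ball) (b : point) : Prop :=
  length b = d /\ dist b (fst w) <= snd w.

Lemma realizes_nil d : realizes d [] [].
Proof. split; simpl; auto; lia. Qed.

Lemma realizes_cons d w W b B :
  in_ball d w b -> realizes d W B -> realizes d (w :: W) (b :: B).
Proof.
  intros Hb [Hlen HB]; split; simpl; auto.
  intros [|j] Hj; simpl; auto. apply HB; lia.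
Qed.

Lemma realizes_cons_inv d w W B : realizes d (w :: W) B ->
  exists b B', B = b :: B' /\ in_ball d w b /\ realizes d W B'.
Proof.
  intros [Hlen HB]; destruct B as [|b B']; simpl in Hlen; [discriminate|].
  exists b, B'; split; [reflexivity|split; [|split]].
  - apply (HB 0%nat); simpl; lia.
  - lia.
  - intros j Hj; apply (HB (S j)); simpl; lia.
Qed.

Section WorstCase.
Variables (d : nat) (delta : R) (U : list point).
Hypothesis Hd : (1 <= d)%nat.
Hypothesis HU : forall u, In u U -> length u = d.

Lemma length_nth_U i : (i < length U)%nat -> length (nth i U []) = d.
Proof. intros; apply HU, nth_In; auto. Qed.

Definition worst_point (w : ball) (i : nat) : point :=
  let s := advance (covers delta w) U i in
  if Nat.ltb s (length U) then far_point (nth s U []) w else fst w.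

Fixpoint worst_realization (W : list ball) (i : nat) : list point :=
  match W with
  | [] => []
  | w :: W' => worst_point w i :: worst_realization W' (advance (covers delta w) U i)
  end.

Lemma worst_point_in_ball w i : ball_in_dim d w -> in_ball d w (worst_point w i).
Proof.
  destruct w as [c r]; intros [Hc Hr]; unfold worst_point, in_ball; simpl in *.
  set (s := advance (covers delta (c, r)) U i).
  destruct (Nat.ltb_spec s (length U)) as [Hs|Hs].
  - pose proof (length_nth_U s Hs) as Hu.
    destruct (far_point_spec (nth s U []) c r) as [Hl [Hdist _]]; [lia| |exact Hr|].
    + intros He; rewrite He in Hu; simpl in Hu; lia.
    + split; [lia|lra].
  - split; [auto|]. rewrite dist_diag; exact Hr.
Qed.

Lemma advance_near_worst_point w i : ball_in_dim d w -> (i <= length U)%nat ->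
  advance (near delta (worst_point w i)) U i = advance (covers delta w) U i.
Proof.
  intros Hw Hi. pose proof (worst_point_in_ball w i Hw) as [Hlb Hdb].
  destruct w as [c r]; destruct Hw as [Hc Hr]; simpl in *.
  set (s := advance (covers delta (c, r)) U i) in *.
  pose proof (advance_ge (covers delta (c, r)) U i).
  pose proof (advance_le (covers delta (c, r)) U i Hi).
  apply (advance_unique _ U []); [lia| |].
  - intros k Hk. apply (covers_near delta (c, r)); simpl; [|lia|exact Hdb|].
    + rewrite Hc; apply length_nth_U; lia.
    + apply (advance_true _ U [] i); lia.
  - destruct (Nat.eq_dec s (length U)) as [|Hs]; [now left|right].
    assert (Hsn : (s < length U)%nat) by lia.
    pose proof (advance_false (covers delta (c, r)) U [] i Hsn) as Hstop.
    apply covers_false in Hstop; simpl in Hstop; fold s in Hstop.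
    unfold worst_point; fold s; destruct (Nat.ltb_spec s (length U)); [|lia].
    pose proof (length_nth_U s Hsn) as Hu.
    destruct (far_point_spec (nth s U []) c r) as [_ [_ Hfar]]; [lia| |exact Hr|].
    + intros He; rewrite He in Hu; simpl in Hu; lia.
    + apply near_false; lra.
Qed.

Lemma realizes_worst_realization W i : (forall w, In w W -> ball_in_dim d w) ->
  realizes d W (worst_realization W i).
Proof.
  revert i; induction W as [|w W IH]; intros i HW; simpl.
  - apply realizes_nil.
  - apply realizes_cons; [apply worst_point_in_ball, HW; now left|].
    apply IH; intros; apply HW; now right.
Qed.

Lemma greedy_worst_realization W i : (forall w, In w W -> ball_in_dim d w) ->
  (i <= length U)%nat ->
  greedy (near delta) U (worst_realization W i) i = greedy (covers delta) U W i.
Proof.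
  revert i; induction W as [|w W IH]; intros i HW Hi; simpl; auto.
  unfold greedy at 1; simpl; fold (greedy (near delta) U).
  rewrite advance_near_worst_point by (auto; apply HW; now left).
  apply IH; [intros; apply HW; now right|apply advance_le; auto].
Qed.

Lemma frechet_c_le_head_run b B i s : (i < s <= length U)%nat ->
  (forall t, (i <= t < s)%nat -> dist (nth t U []) b <= delta) ->
  ((s < length U)%nat -> frechet_c_le (skipn s U) B delta) ->
  frechet_c_le_head delta (skipn i U) b B.
Proof.
  intros Hs Hnear Hrest.
  remember (s - S i)%nat as k eqn:Hk.
  revert i Hs Hnear Hk; induction k as [|k IH]; intros i Hs Hnear Hk;
    rewrite (skipn_nth_cons U i []) by lia.
  - destruct (Nat.eq_dec s (length U)) as [Hsn|Hsn].
    + rewrite skipn_all2 by lia. apply frechet_c_le_head_single, Hnear; lia.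
    + apply frechet_c_le_head_next; [apply Hnear; lia|apply skipn_ne_nil; lia|].
      replace (S i) with s by lia; apply Hrest; lia.
  - apply frechet_c_le_head_stay; [apply Hnear; lia|apply skipn_ne_nil; lia|].
    apply IH; [lia| |lia]. intros t Ht; apply Hnear; lia.
Qed.

Lemma frechet_c_le_of_greedy W B i : (forall w, In w W -> ball_in_dim d w) ->
  realizes d W B -> (i < length U)%nat ->
  (length U <= greedy (covers delta) U W i)%nat -> frechet_c_le (skipn i U) B delta.
Proof.
  revert B i; induction W as [|w W IH]; intros B i HW HB Hi Hgreedy; [simpl in Hgreedy; lia|].
  destruct (realizes_cons_inv d w W B HB) as [b [B' [-> [[Hlb Hdb] HB']]]].
  assert (Hw : ball_in_dim d w) by (apply HW; now left).
  assert (HW' : forall w', In w' W -> ball_in_dim d w') by (intros; apply HW; now right).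
  change (length U <= greedy (covers delta) U W (advance (covers delta w) U i))%nat
    in Hgreedy.
  set (s := advance (covers delta w) U i) in *.
  pose proof (advance_ge (covers delta w) U i); pose proof (advance_le (covers delta w) U i).
  destruct (Nat.eq_dec s i) as [Hsi|Hsi].
  - apply frechet_c_le_skip, IH; auto. rewrite <- Hsi; auto.
  - apply frechet_c_le_keep, (frechet_c_le_head_run b B' i s); [fold s; lia| |].
    + intros t Ht; destruct Hw as [Hc _].
      apply near_true, (covers_near delta w); [|lia|exact Hdb|].
      * rewrite Hc; apply length_nth_U; lia.
      * apply (advance_true _ U [] i); lia.
    + intros Hs; apply IH; auto.
Qed.

Theorem Fmax_le_iff_greedy W : U <> [] -> (forall w, In w W -> ball_in_dim d w) ->
  Fmax_le d U W delta <-> (length U <= greedy (covers delta) U W 0)%nat.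
Proof.
  intros HUn HW; split.
  - intros HF.
    pose proof (frechet_c_le_greedy delta U _ HUn
                  (HF _ (realizes_worst_realization W 0 HW))) as Hg.
    rewrite greedy_worst_realization in Hg; auto; lia.
  - intros Hg B HB; change U with (skipn 0 U).
    apply (frechet_c_le_of_greedy W); auto.
    destruct U; [congruence|simpl; lia].
Qed.

End WorstCase.

Section Execution.
Variable P : program.

Definition reaches (s : state) (Q : state -> Prop) (B : nat) : Prop :=
  exists t, (t <= B)%nat /\ Q (run P t s).

Lemma run_add a b s : run P (a + b) s = run P b (run P a s).
Proof. revert s; induction a; intros; simpl; auto. Qed.

Lemma reaches_done s (Q : state -> Prop) B : Q s -> reaches s Q B.
Proof. intros; exists 0%nat; split; [lia|auto]. Qed.

Lemma reaches_step s Q B : reaches (step P s) Q B -> reaches s Q (S B).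
Proof. intros [t [Ht HQ]]; exists (S t); split; [lia|auto]. Qed.

Lemma reaches_seq s (Q1 Q2 : state -> Prop) B1 B2 : reaches s Q1 B1 ->
  (forall s', Q1 s' -> reaches s' Q2 B2) -> reaches s Q2 (B1 + B2).
Proof.
  intros [t1 [Ht1 HQ1]] H2; destruct (H2 _ HQ1) as [t2 [Ht2 HQ2]].
  exists (t1 + t2)%nat; split; [lia|]; rewrite run_add; auto.
Qed.

Lemma reaches_le s Q B B' : (B <= B')%nat -> reaches s Q B -> reaches s Q B'.
Proof. intros HB [t [Ht H]]; exists t; split; [lia|auto]. Qed.

Lemma reaches_weaken s (Q Q' : state -> Prop) B B' : (B <= B')%nat ->
  (forall s', Q s' -> Q' s') -> reaches s Q B -> reaches s Q' B'.
Proof. intros HB HQ [t [Ht H]]; exists t; split; [lia|auto]. Qed.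

End Execution.

Arguments upd {T} f a v b /.

Lemma upd_same {T} (f : nat -> T) a v : upd f a v a = v.
Proof. simpl; now rewrite Nat.eqb_refl. Qed.

Lemma upd_other {T} (f : nat -> T) a v b : b <> a -> upd f a v b = f b.
Proof. simpl; intros H; now rewrite (proj2 (Nat.eqb_neq b a) H). Qed.

Ltac exec_at H :=
  apply reaches_step; unfold step at 1; cbn [pc]; rewrite H; cbn [pc ir rr im rm hw].

Section AddLoop.
Variables (P : program) (p bound ctr acc inc one : nat).
Hypothesis Htest : nth p P Halt = IJle bound ctr (p + 4).
Hypothesis Hadd : nth (p + 1) P Halt = IAdd acc acc inc.
Hypothesis Hincr : nth (p + 2) P Halt = IAdd ctr ctr one.
Hypothesis Hback : nth (p + 3) P Halt = IJle ctr ctr p.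
Hypothesis Hctr : ctr <> acc /\ ctr <> bound /\ ctr <> inc /\ ctr <> one.
Hypothesis Hacc : acc <> bound /\ acc <> inc /\ acc <> one.

Lemma add_loop r s : pc s = p -> (ir s ctr + r = ir s bound)%nat -> ir s one = 1%nat ->
  reaches P s (fun s' => pc s' = (p + 4)%nat /\
    ir s' acc = (ir s acc + r * ir s inc)%nat /\ ir s' ctr = ir s bound /\
    (forall x, x <> acc -> x <> ctr -> ir s' x = ir s x) /\
    rr s' = rr s /\ rm s' = rm s /\ hw s' = hw s) (4 * r + 1).
Proof.
  destruct Hctr as (Hca & Hcb & Hci & Hco), Hacc as (Hab & Hai & Hao).
  revert s; induction r as [|r IH]; intros [p0 IR RR IM RM HW] Hp Hr Hone;
    cbn [pc ir rr im rm hw] in *; subst p0.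
  - exec_at Htest. rewrite (proj2 (Nat.leb_le _ _)) by lia.
    apply reaches_done; cbn; repeat split; auto; lia.
  - replace (4 * S r + 1)%nat with (S (S (S (S (4 * r + 1))))) by lia.
    exec_at Htest. rewrite (proj2 (Nat.leb_gt _ _)) by lia.
    replace (S p) with (p + 1)%nat by lia. exec_at Hadd.
    replace (S (p + 1)) with (p + 2)%nat by lia. exec_at Hincr.
    replace (S (p + 2)) with (p + 3)%nat by lia. exec_at Hback.
    rewrite upd_same, Nat.leb_refl.
    set (IR' := upd (upd IR acc _) ctr _).
    assert (Hother : forall x, x <> acc -> x <> ctr -> IR' x = IR x)
      by (intros; unfold IR'; rewrite !upd_other; auto).
    assert (Hacc' : IR' acc = (IR acc + IR inc)%nat)
      by (unfold IR'; rewrite upd_other, upd_same; auto).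
    assert (Hctr' : IR' ctr = S (IR ctr))
      by (unfold IR'; rewrite upd_same, !upd_other; auto; lia).
    eapply reaches_weaken; [reflexivity| |apply IH]; cbn [pc ir rr im rm hw].
    + intros s' (Hpc & Hacc_s & Hctr_s & Hfr & Hrr & Hrm & Hhw).
      rewrite (Hother inc), (Hother bound) in * by lia.
      repeat split; auto; [rewrite Hacc_s; nia|].
      intros x Hx1 Hx2; rewrite Hfr, Hother; auto.
    + reflexivity.
    + rewrite Hctr', Hother; auto; lia.
    + rewrite Hother; auto.
Qed.

End AddLoop.

(* Registers: ir 0, ir 1, ir 2 hold d, n, m; ir 3 = i and ir 4 = j are the current
   positions in U and W, and ir 6 = i d, ir 7 = (n + j) d, ir 9 = (n + m) d + j are the
   addresses of u_i, of the center of w_j and of its radius.  ir 5 runs over the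
   coordinates, ir 10 is a scratch address, ir 11 = 1 and ir 12 is a loop counter.
   rr 0 = delta, and rr 1 computes dist u_i c_j + r_j via the sum of squares. *)
Local Open Scope nat_scope.
Definition prog : program := [
  (* 0 *) IConst 11 1;
  (* 1 *) IConst 12 0;
  (* 2 *) IJle 1 12 6;
  (* 3 *) IAdd 7 7 0;
  (* 4 *) IAdd 12 12 11;
  (* 5 *) IJle 12 12 2;
  (* 6 *) IAdd 9 7 13;
  (* 7 *) IConst 12 0;
  (* 8 *) IJle 2 12 12;
  (* 9 *) IAdd 9 9 0;
  (* 10 *) IAdd 12 12 11;
  (* 11 *) IJle 12 12 8;
  (* 12 *) IJle 2 4 38;
  (* 13 *) IJle 1 3 34;
  (* 14 *) RConst 1 0%Z;
  (* 15 *) IConst 5 0;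
  (* 16 *) IJle 0 5 26;
  (* 17 *) IAdd 10 6 5;
  (* 18 *) RLoad 2 10;
  (* 19 *) IAdd 10 7 5;
  (* 20 *) RLoad 3 10;
  (* 21 *) RSub 4 2 3;
  (* 22 *) RMul 4 4 4;
  (* 23 *) RAdd 1 1 4;
  (* 24 *) IAdd 5 5 11;
  (* 25 *) IJle 5 5 16;
  (* 26 *) RSqrt 1 1;
  (* 27 *) RLoad 2 9;
  (* 28 *) RAdd 1 1 2;
  (* 29 *) RJle 1 0 31;
  (* 30 *) IJle 3 3 34;
  (* 31 *) IAdd 3 3 11;
  (* 32 *) IAdd 6 6 0;
  (* 33 *) IJle 3 3 13;
  (* 34 *) IAdd 4 4 11;
  (* 35 *) IAdd 7 7 0;
  (* 36 *) IAdd 9 9 11;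
  (* 37 *) IJle 4 4 12;
  (* 38 *) IConst 0 0;
  (* 39 *) IJle 1 3 41;
  (* 40 *) Halt;
  (* 41 *) IConst 0 1;
  (* 42 *) Halt ].
Local Close Scope nat_scope.

Ltac exec :=
  apply reaches_step; unfold step at 1; cbn [pc];
  lazymatch goal with |- context [nth ?k prog Halt] =>
    let i := eval cbv in (nth k prog Halt) in change (nth k prog Halt) with i
  end;
  cbn [pc ir rr im rm hw upd Nat.eqb].

Ltac solve_frame :=
  cbn [upd ir rr];
  repeat match goal with |- context [Nat.eqb ?x ?k] =>
    destruct (Nat.eqb_spec x k); [subst; lia|] end;
  reflexivity.

Section InputLayout.
Variables (d : nat) (U : list point) (W : list ball).
Hypothesis Hd : (1 <= d)%nat.

Lemma div_mod_layout i k : (k < d -> (i * d + k) / d = i /\ (i * d + k) mod d = k)%nat.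
Proof.
  intros Hk; split.
  - rewrite Nat.div_add_l, Nat.div_small by lia; lia.
  - rewrite Nat.add_comm, Nat.Div0.mod_add; apply Nat.mod_small; auto.
Qed.

Lemma input_mem_point i k : (i < length U)%nat -> (k < d)%nat ->
  input_mem d U W (i * d + k) = nth k (nth i U []) 0.
Proof.
  intros Hi Hk; unfold input_mem.
  destruct (div_mod_layout i k Hk) as [Hdiv Hmod].
  destruct (Nat.ltb_spec (i * d + k) (length U * d)); [|nia].
  now rewrite Hdiv, Hmod.
Qed.

Lemma input_mem_center j k : (j < length W)%nat -> (k < d)%nat ->
  input_mem d U W ((length U + j) * d + k) = nth k (fst (nth j W ([], 0))) 0.
Proof.
  intros Hj Hk; unfold input_mem.
  destruct (Nat.ltb_spec ((length U + j) * d + k) (length U * d)); [nia|].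
  destruct (Nat.ltb_spec ((length U + j) * d + k) ((length U + length W) * d)); [|nia].
  replace ((length U + j) * d + k - length U * d)%nat with (j * d + k)%nat by nia.
  destruct (div_mod_layout j k Hk) as [Hdiv Hmod]; now rewrite Hdiv, Hmod.
Qed.

Lemma input_mem_radius j : (j < length W)%nat ->
  input_mem d U W ((length U + length W) * d + j) = snd (nth j W ([], 0)).
Proof.
  intros Hj; unfold input_mem.
  set (N := ((length U + length W) * d)%nat).
  destruct (Nat.ltb_spec (N + j) (length U * d)); [unfold N in *; nia|].
  destruct (Nat.ltb_spec (N + j) N); [lia|].
  destruct (Nat.ltb_spec (N + j) (N + length W)); [|lia].
  now replace (N + j - N)%nat with j by lia.
Qed.

End InputLayout.

Fixpoint sqsum_upto (u c : point) (k : nat) : R :=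
  match k with
  | O => 0
  | S k' => sqsum_upto u c k' + (nth k' u 0 - nth k' c 0) * (nth k' u 0 - nth k' c 0)
  end.

Lemma sqsum_upto_cons x y u c k :
  sqsum_upto (x :: u) (y :: c) (S k) = (x - y) * (x - y) + sqsum_upto u c k.
Proof. induction k as [|k IH]; simpl in *; [ring|]. rewrite IH; ring. Qed.

Lemma sqsum_upto_length u c : length u = length c -> sqsum_upto u c (length u) = sqsum u c.
Proof.
  revert c; induction u as [|x u IH]; intros [|y c] H; simpl in *; try lia; auto.
  change (sqsum_upto (x :: u) (y :: c) (S (length u)) = (x - y) * (x - y) + sqsum u c).
  rewrite sqsum_upto_cons, IH; auto.
Qed.

Lemma sqsum_loop (u c : point) r s : pc s = 16%nat -> (ir s 5 + r = ir s 0)%nat ->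
  ir s 11 = 1%nat -> rr s 1 = sqsum_upto u c (ir s 5) ->
  (forall k, (k < ir s 0)%nat ->
     rm s (ir s 6 + k) = nth k u 0 /\ rm s (ir s 7 + k) = nth k c 0) ->
  (ir s 6 + ir s 0 <= hw s)%nat -> (ir s 7 + ir s 0 <= hw s)%nat ->
  reaches prog s (fun s' => pc s' = 26%nat /\ rr s' 1 = sqsum_upto u c (ir s 0) /\
    (forall x, x <> 5%nat -> x <> 10%nat -> ir s' x = ir s x) /\
    rr s' 0 = rr s 0 /\ rm s' = rm s /\ hw s' = hw s) (10 * r + 1).
Proof.
  revert s; induction r as [|r IH]; intros [p0 IR RR IM RM HW] Hp Hk Hone Hsum Hmem Hb6 Hb7;
    cbn [pc ir rr im rm hw] in *; subst p0.
  - exec. rewrite (proj2 (Nat.leb_le _ _)) by lia.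
    apply reaches_done; cbn; rewrite <- Hk, Nat.add_0_r; repeat split; auto.
  - replace (10 * S r + 1)%nat with (S (S (S (S (S (S (S (S (S (S (10 * r + 1))))))))))) by lia.
    exec. rewrite (proj2 (Nat.leb_gt _ _)) by lia.
    do 9 exec. rewrite Nat.leb_refl.
    destruct (Hmem (IR 5%nat) ltac:(lia)) as [Hu Hc].
    eapply reaches_weaken; [reflexivity| |apply IH; cbn].
    + intros s' (Hpc & Hsum' & Hfr & Hrr & Hrm & Hhw); cbn [pc ir rr im rm hw upd Nat.eqb] in *.
      repeat split; auto.
      * intros x Hx5 Hx10; rewrite Hfr by auto; solve_frame.
      * rewrite Hhw; lia.
    + auto.
    + lia.
    + auto.
    + rewrite Hone, Nat.add_1_r; cbn [sqsum_upto]; rewrite Hsum, Hu, Hc; reflexivity.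
    + exact Hmem.
    + lia.
    + lia.
Qed.

Section Program.
Variables (d : nat) (U : list point) (W : list ball) (delta : R).
Hypothesis Hd : (1 <= d)%nat.
Hypothesis HU : forall u, In u U -> length u = d.
Hypothesis HW : forall w, In w W -> ball_in_dim d w.
Local Notation n := (length U).
Local Notation m := (length W).

Definition input_size : nat := ((n + m) * d + m)%nat.

Definition scan_inv (p i j : nat) (s : state) : Prop :=
  pc s = p /\ ir s 0 = d /\ ir s 1 = n /\ ir s 2 = m /\ ir s 3 = i /\ ir s 4 = j /\
  ir s 6 = (i * d)%nat /\ ir s 7 = ((n + j) * d)%nat /\ ir s 9 = ((n + m) * d + j)%nat /\
  ir s 11 = 1%nat /\ rr s 0 = delta /\ rm s = input_mem d U W /\ hw s = input_size.

Lemma scan_inv_frame p' p i j s s' : scan_inv p i j s -> pc s' = p' ->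
  (forall x, x <> 5%nat -> x <> 10%nat -> ir s' x = ir s x) ->
  rr s' 0 = rr s 0 -> rm s' = rm s -> hw s' = hw s -> scan_inv p' i j s'.
Proof.
  intros (_ & E0 & E1 & E2 & E3 & E4 & E6 & E7 & E9 & E11 & R0 & Rm & Hh) Hp Hfr HR0 Hrm Hhw.
  repeat split; try rewrite Hfr by lia; congruence.
Qed.

Lemma cover_test i j s : (i < n)%nat -> (j < m)%nat -> scan_inv 13 i j s ->
  reaches prog s
    (scan_inv (if covers delta (nth j W ([], 0)) (nth i U []) then 31 else 30) i j)
    (10 * d + 8).
Proof.
  intros Hi Hj Hinv; destruct s as [p0 IR RR IM RM HW0].
  pose proof Hinv as (Hp & E0 & E1 & E2 & E3 & E4 & E6 & E7 & E9 & E11 & R0 & Rm & Hh).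
  cbn [pc ir rr im rm hw] in *; subst p0 RM HW0.
  set (w := nth j W ([], 0)) in *; set (u := nth i U []); set (c := fst w).
  destruct (HW w (nth_In _ _ Hj)) as [Hc _].
  assert (Hu : length u = d) by (apply HU, nth_In; lia).
  replace (10 * d + 8)%nat with (3 + ((10 * d + 1) + 4))%nat by lia.
  exec. rewrite (proj2 (Nat.leb_gt _ _)) by lia. exec. exec.
  eapply reaches_seq.
  { apply (sqsum_loop u c d); cbn; auto; try lia.
    - intros k Hk; rewrite E6, E7; split.
      + apply input_mem_point; lia.
      + apply input_mem_center; lia.
    - unfold input_size; nia.
    - unfold input_size; nia. }
  intros [p1 IR1 RR1 IM1 RM1 HW1] (Hp1 & Hsum & Hfr & HR0 & Hrm & Hhw).
  cbn [pc ir rr im rm hw upd Nat.eqb] in *; subst p1 RM1 HW1.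
  do 4 exec.
  rewrite Hfr by lia; cbn [upd Nat.eqb]; rewrite E9, input_mem_radius, Hsum, HR0, R0 by auto.
  replace (sqsum_upto u c (IR 0%nat)) with (sqsum u c)
    by (rewrite E0, <- Hu; symmetry; apply sqsum_upto_length; unfold c; lia).
  change (sqrt (sqsum u c)) with (dist u c).
  assert (Hframe : forall x, x <> 5%nat -> x <> 10%nat -> IR1 x = IR x)
    by (intros x Hx5 Hx10; rewrite Hfr by auto; solve_frame).
  assert (Hsize : Nat.max input_size (S ((n + m) * d + j)) = input_size)
    by (unfold input_size; lia).
  unfold covers; destruct (Rle_dec _ _); apply reaches_done;
    apply (scan_inv_frame _ 13 i j _ _ Hinv); cbn; auto.
Qed.

Lemma next_point i j s : scan_inv 31 i j s -> reaches prog s (scan_inv 13 (S i) j) 3.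
Proof.
  destruct s as [p0 IR RR IM RM HW0];
    intros (Hp & E0 & E1 & E2 & E3 & E4 & E6 & E7 & E9 & E11 & R0 & Rm & Hh);
    cbn [pc ir rr im rm hw] in *; subst p0.
  exec. exec. exec. rewrite Nat.leb_refl.
  apply reaches_done; unfold scan_inv; cbn; repeat split; auto; lia.
Qed.

Lemma next_ball i j s : scan_inv 34 i j s -> reaches prog s (scan_inv 12 i (S j)) 4.
Proof.
  destruct s as [p0 IR RR IM RM HW0];
    intros (Hp & E0 & E1 & E2 & E3 & E4 & E6 & E7 & E9 & E11 & R0 & Rm & Hh);
    cbn [pc ir rr im rm hw] in *; subst p0.
  exec. exec. exec. exec. rewrite Nat.leb_refl.
  apply reaches_done; unfold scan_inv; cbn; repeat split; auto; lia.
Qed.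

Lemma scan_ball r i j s : (i + r = n)%nat -> (j < m)%nat -> scan_inv 13 i j s ->
  reaches prog s (scan_inv 12 (advance (covers delta (nth j W ([], 0))) U i) (S j))
    ((10 * d + 11) * (advance (covers delta (nth j W ([], 0))) U i - i) + (10 * d + 13)).
Proof.
  set (f := covers delta (nth j W ([], 0))).
  revert i s; induction r as [|r IH]; intros i s Hr Hj Hinv.
  - rewrite advance_end, Nat.sub_diag, Nat.mul_0_r by lia.
    apply (reaches_le _ _ _ (1 + 4)); [lia|].
    destruct s as [p0 IR RR IM RM HW0].
    pose proof Hinv as (Hp & _ & E1 & _ & E3 & _); cbn [pc ir] in *; subst p0.
    exec. rewrite (proj2 (Nat.leb_le _ _)) by lia.
    apply next_ball; eapply scan_inv_frame; [exact Hinv|..]; reflexivity.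
  - pose proof (cover_test i j s ltac:(lia) Hj Hinv) as Htest; fold f in Htest.
    rewrite (advance_step f U [] i) by lia.
    destruct (f (nth i U [])).
    + pose proof (advance_ge f U (S i)).
      eapply reaches_le.
      2: { eapply reaches_seq; [exact Htest|]. intros s' Hs'.
           eapply reaches_seq; [apply (next_point _ _ _ Hs')|].
           intros s'' Hs''; apply (IH (S i)); auto; lia. }
      nia.
    + rewrite Nat.sub_diag, Nat.mul_0_r.
      eapply reaches_le.
      2: { eapply reaches_seq; [exact Htest|].
           intros [p0 IR RR IM RM HW0] Hs'.
           pose proof Hs' as (Hp & _); cbn [pc] in Hp; subst p0.
           exec; rewrite Nat.leb_refl.
           apply next_ball; eapply scan_inv_frame; [exact Hs'|..]; reflexivity. }
      lia.
Qed.

Let prefix_greedy (j : nat) : nat := greedy (covers delta) U (firstn j W) 0.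

Lemma scan_balls r j s : (j + r = m)%nat -> scan_inv 12 (prefix_greedy j) j s ->
  reaches prog s (scan_inv 38 (prefix_greedy m) m)
    ((10 * d + 11) * (n - prefix_greedy j) + (10 * d + 14) * r + 1).
Proof.
  revert j s; induction r as [|r IH]; intros j [p0 IR RR IM RM HW0] Hr Hinv;
    pose proof Hinv as (Hp & _ & _ & E2 & _ & E4 & _); cbn [pc ir] in *; subst p0.
  - apply (reaches_le _ _ _ 1); [nia|].
    exec. rewrite (proj2 (Nat.leb_le _ _)) by lia.
    replace m with j by lia.
    apply reaches_done; eapply scan_inv_frame; [exact Hinv|..]; reflexivity.
  - assert (Hj : (j < m)%nat) by lia.
    assert (Hnext : prefix_greedy (S j)
                    = advance (covers delta (nth j W ([], 0))) U (prefix_greedy j))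
      by (apply greedy_firstn_S; auto).
    pose proof (greedy_le (covers delta) U (firstn j W) 0 ltac:(lia)).
    pose proof (advance_ge (covers delta (nth j W ([], 0))) U (prefix_greedy j)).
    pose proof (greedy_le (covers delta) U (firstn (S j) W) 0 ltac:(lia)).
    fold (prefix_greedy j) (prefix_greedy (S j)) in *.
    eapply reaches_le.
    2: { exec. rewrite (proj2 (Nat.leb_gt _ _)) by lia.
         eapply reaches_seq.
         - apply (scan_ball (n - prefix_greedy j) (prefix_greedy j) j); [lia|auto|].
           eapply scan_inv_frame; [exact Hinv|..]; reflexivity.
         - intros s' Hs'; rewrite <- Hnext in Hs'; apply (IH (S j)); auto; lia. }
    rewrite <- Hnext.
    replace (n - prefix_greedy j)%nat
      with ((prefix_greedy (S j) - prefix_greedy j) + (n - prefix_greedy (S j)))%nat by lia.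
    nia.
Qed.

Lemma report i s : scan_inv 38 i m s ->
  reaches prog s (fun s' => halted prog s' /\ hw s' = input_size /\
                            (ir s' 0 = 1%nat <-> (n <= i)%nat)) 3.
Proof.
  destruct s as [p0 IR RR IM RM HW0];
    intros (Hp & _ & E1 & _ & E3 & _ & _ & _ & _ & _ & _ & _ & Hh);
    cbn [pc ir rr im rm hw] in *; subst p0 HW0.
  exec. exec.
  destruct (Nat.leb_spec (IR 1%nat) (IR 3%nat)).
  - exec. apply reaches_done; unfold halted; cbn; repeat split; auto; lia.
  - apply reaches_done; unfold halted; cbn; repeat split; auto; lia.
Qed.

Lemma setup : reaches prog (init_state d U W delta) (scan_inv 12 0 0) (4 * (n + m) + 6).
Proof.
  unfold init_state.
  replace (4 * (n + m) + 6)%nat with (2 + ((4 * n + 1) + (2 + ((4 * m + 1) + 0))))%nat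
    by lia.
  exec. exec.
  eapply reaches_seq.
  { apply (add_loop prog 2 1 12 7 0 11); cbn; auto; lia. }
  intros [p1 IR1 RR1 IM1 RM1 HW1] (Hp1 & H7 & _ & Hfr & Hrr & Hrm & Hhw).
  cbn [pc ir rr im rm hw upd Nat.eqb] in *; subst p1 RR1 RM1 HW1.
  exec. exec.
  eapply reaches_seq.
  { apply (add_loop prog 8 2 12 9 0 11); cbn; auto; try lia.
    all: rewrite Hfr by lia; reflexivity. }
  intros [p2 IR2 RR2 IM2 RM2 HW2] (Hp2 & H9 & _ & Hfr' & Hrr & Hrm & Hhw).
  cbn [pc ir rr im rm hw upd Nat.eqb] in *; subst p2 RR2 RM2 HW2.
  apply reaches_done; unfold scan_inv; cbn.
  repeat split; auto.
  all: rewrite ?H9, ?Hfr' by lia; cbn [Nat.eqb]; rewrite ?H7, ?Hfr by lia; cbn; nia.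
Qed.

Lemma prog_decides :
  reaches prog (init_state d U W delta)
    (fun s => halted prog s /\ hw s = input_size /\
              (ir s 0 = 1%nat <-> (n <= greedy (covers delta) U W 0)%nat))
    ((4 * (n + m) + 6) + ((10 * d + 11) * n + (10 * d + 14) * m + 1) + 3).
Proof.
  eapply reaches_seq; [eapply reaches_seq; [apply setup|]|].
  - intros s Hs; eapply reaches_le; [|exact (scan_balls m 0 s eq_refl Hs)].
    change (prefix_greedy 0) with 0%nat; rewrite Nat.sub_0_r; lia.
  - intros s Hs; unfold prefix_greedy in Hs; rewrite firstn_all in Hs.
    exact (report _ s Hs).
Qed.

End Program.

Theorem lemma4p2 :
  exists (P : program) (c : nat),
    forall (d : nat) (U : list point) (W : list ball) (delta : R),
      (1 <= d)%nat -> U <> [] -> W <> [] ->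
      (forall u, In u U -> length u = d) ->
      (forall w, In w W -> length (fst w) = d /\ 0 <= snd w) ->
      0 < delta ->
      exists t : nat,
        (t <= c * (d * (length U + length W)))%nat /\
        halted P (run P t (init_state d U W delta)) /\
        (hw (run P t (init_state d U W delta))
           <= c * (d * (length U + length W)))%nat /\
        (ir (run P t (init_state d U W delta)) 0%nat = 1%nat
           <-> Fmax_le d U W delta).
Proof.
  exists prog, 50%nat.
  intros d U W delta Hd HUn _ HU HW _.
  destruct (prog_decides d U W delta Hd HU HW) as [t [Ht (Hhalt & Hhw & Hres)]].
  assert (Hn : (1 <= length U)%nat) by (destruct U; simpl; [congruence|lia]).
  exists t; split; [nia|split; [exact Hhalt|split]].
  - rewrite Hhw; unfold input_size; nia.
  - rewrite Hres, (Fmax_le_iff_greedy d delta U Hd HU W HUn HW); reflexivity.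
Qed.
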